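(* Let $p$ be an odd prime, $q=p^m$ with $m>1$, and $S=S_\Lambda(q)$. Then $V=\Lambda(q)$ and $U[V,S]$ are the unique normal subgroups of $S$ of index $q$ which have exponent $p$. In particular, $U[V,S]$ is characteristic in $S$.
   Context: Let $\mathbb{K}=\mathbb{F}_q$; $V_p(q)$ is the $\mathbb{K}$-space of homogeneous polynomials of degree $p$ in $\mathbb{K}[x,y]$ with right $\mathrm{GL}_2(\mathbb{K})$-action $f\cdot\begin{pmatrix}a&b\\c&d\end{pmatrix}=f(ax+by,cx+dy)$; $\Lambda(q)=\mathrm{Hom}_{\mathbb{K}}(V_p(q),\mathbb{K})$ with $(w)(\eta g)=(wg^{-1})\eta$. $U=\{\begin{pmatrix}1&0\\c&1\end{pmatrix}:c\in\mathbb{K}\}$ and $S_\Lambda(q)=U\ltimes\Lambda(q)$, with $U$ and $V=\Lambda(q)$ identified as subgroups of $S$; $[V,S]$ is the commutator subgroup. *)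

From HB Require Import structures.
From mathcomp Require Import all_boot all_order all_algebra all_fingroup all_solvable all_field.
Set Implicit Arguments. Unset Strict Implicit. Unset Printing Implicit Defensive.
Import GRing.Theory.
Local Open Scope ring_scope.

(* Conventions:
   - K = F : finFieldType, p = n.
   - V_n(q) (homogeneous forms of degree n in K[x,y]) is identified with
     polynomials g in K[y] of degree <= n via dehomogenisation g(y)=f(1,y);
     the monomial x^(n-i) y^i corresponds to 'X^i.  Under this identification
     f |-> f.(1 0; c 1) = f(x, cx+y) becomes g |-> g \Po ('X + c%:P).
   - Lambda(q) = Hom(V_n(q),K) is represented by coordinate row vectors
     h : 'rV_(n+1) w.r.t. the dual monomial basis: eta_h(g) = sum_i g_i h_i.
   - The right action (eta u_c)(w) = (w u_c^{-1}) eta = eta(w u_{-c}), i.e.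
     (lam_act h c)_j = eta_h ( ('X - c%:P)^j ).
   - S = U |x Lambda has elements (c, h) ~ u_c * eta_h with
     (c1,h1)(c2,h2) = (c1+c2, h1.u_{c2} + h2). *)

Section SLambda.
Variables (F : finFieldType) (n : nat).

Definition lam_ev (h : 'rV[F]_n.+1) (g : {poly F}) : F :=
  \sum_(i < n.+1) g`_i * h 0 i.

Definition lam_act (h : 'rV[F]_n.+1) (c : F) : 'rV[F]_n.+1 :=
  \row_(j < n.+1) lam_ev h (('X - c%:P) ^+ j).

Lemma comp_XsubC_exp (a b : F) j :
  (('X - b%:P) ^+ j) \Po ('X - a%:P) = ('X - (a + b)%:P) ^+ j.
Proof.
elim: j => [|j IH]; first by rewrite !expr0 comp_polyC.
rewrite !exprS comp_polyM IH comp_polyB comp_polyX comp_polyC.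
by rewrite polyCD opprD addrA.
Qed.

Lemma lam_actA h a b : lam_act (lam_act h a) b = lam_act h (a + b).
Proof.
apply/rowP=> j; rewrite !mxE /lam_ev.
under eq_bigr => i _ do rewrite mxE big_distrr /=.
rewrite exchange_big /=; apply: eq_bigr => k _.
rewrite -comp_XsubC_exp coef_comp_poly size_exp_XsubC big_distrl /=.
have lej : (j.+1 <= n.+1)%N by exact: ltn_ord.
rewrite (big_ord_widen n.+1 (fun i => ((('X - b%:P) ^+ j)`_i * (('X - a%:P) ^+ i)`_k) * h 0 k) lej).
rewrite [RHS]big_mkcond /=; apply: eq_bigr => i _; rewrite mulrA.
case: ltnP => // Hi; rewrite nth_default ?size_exp_XsubC // !mul0r; by [].
Qed.

Lemma lam_act0 h : lam_act h 0 = h.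
Proof.
apply/rowP=> j; rewrite mxE /lam_ev subr0.
rewrite (bigD1 j) //= coefXn eqxx mul1r big1 ?addr0 // => i Hij.
have /negbTE E : (i : nat) != j by [].
by rewrite coefXn E mul0r.
Qed.

Lemma lam_actD h1 h2 c : lam_act (h1 + h2) c = lam_act h1 c + lam_act h2 c.
Proof.
apply/rowP=> j; rewrite !mxE /lam_ev -big_split /=.
by apply: eq_bigr => i _; rewrite mxE mulrDr.
Qed.

Lemma lam_actN h c : lam_act (- h) c = - lam_act h c.
Proof.
apply/rowP=> j; rewrite !mxE /lam_ev -sumrN /=.
by apply: eq_bigr => i _; rewrite mxE mulrN.
Qed.

Record SLam_type := SLam_of { slam_val : F * 'rV[F]_n.+1 }.
HB.instance Definition _ := [isNew for slam_val].
HB.instance Definition _ := [Finite of SLam_type by <:].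

Definition slam_mul (x y : SLam_type) : SLam_type :=
  SLam_of ((slam_val x).1 + (slam_val y).1,
           lam_act (slam_val x).2 (slam_val y).1 + (slam_val y).2).
Definition slam_one : SLam_type := SLam_of (0, 0).
Definition slam_inv (x : SLam_type) : SLam_type :=
  SLam_of (- (slam_val x).1, - lam_act (slam_val x).2 (- (slam_val x).1)).

Lemma slam_mulA : associative slam_mul.
Proof.
move=> [[a x]] [[b y]] [[c z]]; rewrite /slam_mul /=.
by rewrite addrA lam_actD lam_actA addrA.
Qed.

Lemma lam_act0h c : lam_act 0 c = 0.
Proof.
apply/rowP=> j; rewrite !mxE /lam_ev big1 // => i _; by rewrite mxE mulr0.
Qed.

Lemma slam_mul1 : left_id slam_one slam_mul.
Proof. by move=> [[a x]]; rewrite /slam_mul /= add0r lam_act0h add0r. Qed.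

Lemma slam_mulV : left_inverse slam_one slam_inv slam_mul.
Proof.
move=> [[a x]]; rewrite /slam_mul /slam_inv /= addNr lam_actN lam_actA addNr.
by rewrite lam_act0 addNr.
Qed.

HB.instance Definition _ :=
  Finite_isGroup.Build SLam_type slam_mulA slam_mul1 slam_mulV.

End SLambda.

Definition SLam (F : finFieldType) (n : nat) : {set SLam_type F n} := [set: SLam_type F n].

Definition ULam (F : finFieldType) (n : nat) : {set SLam_type F n} :=
  [set SLam_of (c, (0 : 'rV[F]_n.+1)) | c : F].

Definition VLam (F : finFieldType) (n : nat) : {set SLam_type F n} :=
  [set SLam_of ((0 : F), h) | h : 'rV[F]_n.+1].

From HB Require Import structures.
From mathcomp Require Import all_boot all_order all_algebra all_fingroup all_solvable all_field.
From mathcomp Require Import zify ring.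
Set Implicit Arguments. Unset Strict Implicit. Unset Printing Implicit Defensive.
Import GRing.Theory.

(* The coordinates [(c, eta) |-> c] and [(c, eta) |-> eta(x^p)] are homomorphisms
   from S onto (K, +), with kernels V and U[V, S]; for the latter, the commutators
   [eta (u_c - 1)] generate every [eta] with [eta(x^p) = 0], using some [c] with
   [c^p <> c], which exists because K is not the prime field.  Power sums over F_p give
   [(c, eta)^p = (0, - c^(p-1) eta(x^p) e)] with [e <> 0], so an element has order
   dividing p iff it lies in one of the two kernels.  A subgroup of exponent p thus lies
   in their union, hence in one of them, and equals it when its index is q.  Finally V is
   abelian and U[V, S] is not, so no automorphism can move U[V, S]. *)

Section GroupFacts.
Variable gT : finGroupType.
Implicit Types G H K : {group gT}.
Local Open Scope group_scope.

Lemma subsetU_group G H K :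
  G \subset H :|: K -> (G \subset H) || (G \subset K).
Proof.
move=> sGHK; apply/norP => -[/subsetPn[x Gx Hx] /subsetPn[y Gy Ky]].
have /setUP[Hxy | Kxy] := subsetP sGHK _ (groupM Gx Gy).
- have Hy : y \in H by have /setUP[] := subsetP sGHK y Gy; last by rewrite (negbTE Ky).
  by rewrite -(groupMr x Hy) Hxy in Hx.
- have Kx : x \in K by have /setUP[] := subsetP sGHK x Gx; first by rewrite (negbTE Hx).
  by rewrite -(groupMl y Kx) Kxy in Ky.
Qed.

Lemma card_eq_indexg G H K :
  H \subset G -> K \subset G -> #|G : H| = #|G : K| -> #|H| = #|K|.
Proof.
move=> sHG sKG eHK; apply/eqP.
by rewrite -(eqn_pmul2r (indexg_gt0 G K)) -{1}eHK !Lagrange.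
Qed.

Lemma exponent_prime G p :
  prime p -> G :!=: 1 -> {in G, forall x, x ^+ p = 1} -> exponent G = p.
Proof.
move=> p_pr ntG Gp; apply/(prime_nt_dvdP p_pr); last exact/exponentP.
by apply: contra ntG => /eqP e1; rewrite trivg_exponent e1.
Qed.

End GroupFacts.

Section MorphismFacts.
Variables (aT rT : finGroupType) (G : {group aT}) (f : {morphism G >-> rT}).
Local Open Scope group_scope.

Lemma index_ker_onto : f @* G = [set: rT] -> #|G : 'ker f| = #|rT|.
Proof. by move=> fG; rewrite -[G in #|G : _|]setIid -card_morphim fG cardsT. Qed.

End MorphismFacts.

Local Open Scope ring_scope.

Section BinomialCoefficients.
Variable R : comNzRingType.

Lemma coef_XaddC_exp (c : R) j i :
  (('X + c%:P) ^+ j)`_i = c ^+ (j - i) *+ 'C(j, i).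
Proof.
rewrite addrC exprDn coef_sum.
under eq_bigr => k _ do rewrite coefMn -rmorphXn coefCM coefXn.
case: (ltnP i j.+1) => [ilt | jlt].
  rewrite (bigD1 (Ordinal ilt)) //= eqxx mulr1 big1 ?addr0 // => k /= neq_ki.
  suff /negbTE-> : i != k by rewrite mulr0 mul0rn.
  by apply: contraNneq neq_ki => ik; rewrite -val_eqE /= ik.
rewrite bin_small // mulr0n big1 // => k _.
by rewrite gtn_eqF ?mulr0 ?mul0rn // (leq_trans (ltn_ord k) jlt).
Qed.

Lemma coef_XsubC_exp (c : R) j i :
  (('X - c%:P) ^+ j)`_i = (- c) ^+ (j - i) *+ 'C(j, i).
Proof. by rewrite -polyCN coef_XaddC_exp. Qed.

End BinomialCoefficients.

Section PowerSums.
Variables (R : idomainType) (p : nat).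
Hypothesis pcharRp : p \in [pchar R].

Definition power_sum e : R := \sum_(l < p) l%:R ^+ e.

Lemma natr_pchar_neq0 k : (0 < k < p)%N -> k%:R != 0 :> R.
Proof.
case/andP=> k_gt0 k_lt_p; rewrite -(dvdn_pcharf pcharRp).
by apply: contraTN k_lt_p => /(dvdn_leq k_gt0); rewrite leqNgt.
Qed.

(* Telescoping [(l + 1)^(e+1) - l^(e+1)] over [l < p] gives
   [\sum_(t <= e) 'C(e.+1, t) power_sum t = p^(e+1) = 0]. *)
Lemma power_sum_eq0 e : (e.+1 < p)%N -> power_sum e = 0.
Proof.
elim/ltn_ind: e => e IHe e_lt.
have telescope : \sum_(l < p) ((l.+1%:R : R) ^+ e.+1 - l%:R ^+ e.+1) = 0.
  rewrite -(big_mkord xpredT (fun l => (l.+1%:R : R) ^+ e.+1 - l%:R ^+ e.+1)).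
  by rewrite telescope_sumr // (pcharf0 pcharRp) expr0n subrr.
have : \sum_(t < e.+1) power_sum t *+ 'C(e.+1, t) = 0.
  rewrite -[RHS]telescope /power_sum.
  under eq_bigr => t _ do rewrite -sumrMnl.
  rewrite exchange_big /=; apply: eq_bigr => l _.
  by rewrite mulrSr exprD1n [in RHS]big_ord_recr /= binn mulr1n addrK.
rewrite big_ord_recr /= big1 ?add0r => [|t _]; last first.
  by rewrite IHe ?mul0rn // (leq_ltn_trans _ e_lt) // ltnS ltnW.
move/eqP; rewrite binSn -mulr_natr mulf_eq0 => /orP[/eqP // | ].
by rewrite (negbTE (natr_pchar_neq0 _)) // e_lt.
Qed.

Lemma power_sum_pred : power_sum p.-1 = -1.
Proof.
have p_gt1 := prime_gt1 (pcharf_prime pcharRp).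
have p1_gt0 : (0 < p.-1)%N by lia.
rewrite /power_sum -(big_mkord xpredT (fun l => (l%:R : R) ^+ p.-1)).
rewrite big_ltn ?(ltnW p_gt1) // expr0n (gtn_eqF p1_gt0) add0r.
rewrite (eq_big_nat _ _ (F2 := fun _ => 1)) => [|l /andP[l_gt0 l_lt_p]].
  by rewrite sumr_const_nat natrB ?(ltnW p_gt1) // (pcharf0 pcharRp) sub0r.
apply: (mulIf (natr_pchar_neq0 (k := l) _)); first by rewrite l_gt0.
rewrite mul1r -exprSr prednK ?(ltnW p_gt1) //.
by rewrite -(pFrobenius_autE pcharRp) rmorph_nat.
Qed.

Lemma power_sum_p : (2 < p)%N -> power_sum p = 0.
Proof.
move=> p_gt2; rewrite -[RHS](power_sum_eq0 (e := 1)) //.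
by apply: eq_bigr => l _; rewrite -(pFrobenius_autE pcharRp) rmorph_nat.
Qed.

Lemma sum_XsubC_exp (c : R) j : odd p -> (j <= p)%N ->
  \sum_(l < p) ('X - (l%:R * c)%:P) ^+ j = ((- c ^+ p.-1) *+ (j == p.-1))%:P.
Proof.
move=> p_odd j_le_p; have p_gt2 := odd_prime_gt2 p_odd (pcharf_prime pcharRp).
apply/polyP => i; rewrite coef_sum coefC.
have -> : \sum_(l < p) (('X - (l%:R * c)%:P) ^+ j)`_i
    = (power_sum (j - i) * (- c) ^+ (j - i)) *+ 'C(j, i).
  rewrite /power_sum mulr_suml -sumrMnl; apply: eq_bigr => l _.
  by rewrite coef_XsubC_exp -mulrN exprMn.
case: (ltnP j i) => [j_lt_i | i_le_j].
  by rewrite bin_small // gtn_eqF ?mulr0n // (leq_ltn_trans _ j_lt_i).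
case: (ltnP (j - i).+1 p) => [small | large].
  rewrite power_sum_eq0 // mul0r mul0rn; case: eqP => // i0.
  have -> : (j == p.-1) = false by lia.
  by rewrite mulr0n.
have [[-> ->] | [[-> ->] | [-> ->]]] :
    (i = 0 /\ j = p.-1) \/ (i = 0 /\ j = p) \/ (i = 1 /\ j = p) by lia.
- rewrite eqxx subn0 bin0 mulr1n power_sum_pred mulN1r exprNn.
  have even_p1 : odd p.-1 = false.
    by move: p_odd; rewrite -(prednK (ltnW (ltnW p_gt2))) /= => /negbTE.
  by rewrite -signr_odd even_p1 mul1r eqxx.
- have -> : (p == p.-1) = false by lia.
  by rewrite subn0 power_sum_p // mul0r mul0rn mulr0n.
- by rewrite bin1 mulrn_pchar.
Qed.

End PowerSums.

Lemma exists_frobenius_nonfixed (R : finIdomainType) p :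
  (1 < p < #|R|)%N -> exists d : R, d ^+ p != d.
Proof.
case/andP=> p_gt1 R_gt_p.
case: (pickP (fun d : R => d ^+ p != d)) => [d | fixed]; first by exists d.
have size_P : size ('X^p - 'X : {poly R}) = p.+1.
  by rewrite size_polyDl ?size_polyXn // size_polyN size_polyX ltnS.
have P_neq0 : 'X^p - 'X != 0 :> {poly R} by rewrite -size_poly_gt0 size_P.
have rootsP : all (root ('X^p - 'X)) (enum R).
  by apply/allP => x _; rewrite /root !hornerE subr_eq0; move/negbFE: (fixed x).
have := max_poly_roots P_neq0 rootsP (enum_uniq R).
by rewrite -cardE size_P ltnS leqNgt R_gt_p.
Qed.

Section SLambdaGroup.
Variables (F : finFieldType) (p : nat).
Local Notation sT := (SLam_type F p).
Local Notation mk c h := (@SLam_of F p (c, h)).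
Local Notation S := (SLam F p).
Local Notation V := (VLam F p).
Local Notation U := (ULam F p).
Implicit Types (c : F) (h w : 'rV[F]_p.+1).

Lemma slam_mulE c1 c2 h1 h2 :
  (mk c1 h1 * mk c2 h2)%g = mk (c1 + c2) (lam_act h1 c2 + h2).
Proof. by []. Qed.

Lemma slam_oneE : (1%g : sT) = mk 0 0.
Proof. by []. Qed.

Lemma slam_invE c h : (mk c h)^-1%g = mk (- c) (- lam_act h (- c)).
Proof. by []. Qed.

Lemma slam_expE c h k :
  ((mk c h) ^+ k)%g = mk (k%:R * c) (\sum_(l < k) lam_act h (l%:R * c)).
Proof.
elim: k => [|k IHk]; first by rewrite expg0 big_ord0 mul0r.
rewrite expgS IHk slam_mulE big_ord_recr /= addrC mulrSr mulrDl mul1r.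
by congr (mk _ _); rewrite addrC.
Qed.

Lemma lam_evC h a : lam_ev h a%:P = a * h 0 0.
Proof.
rewrite /lam_ev (bigD1 ord0) //= coefC eqxx big1 ?addr0 // => i.
by rewrite coefC -val_eqE /= => /negbTE->; rewrite mul0r.
Qed.

Lemma lam_ev_sum h I (r : seq I) (P : pred I) (g : I -> {poly F}) :
  lam_ev h (\sum_(k <- r | P k) g k) = \sum_(k <- r | P k) lam_ev h (g k).
Proof.
rewrite /lam_ev exchange_big /=; apply: eq_bigr => i _.
by rewrite coef_sum mulr_suml.
Qed.

Lemma lam_act_coord0 h c : lam_act h c 0 0 = h 0 0.
Proof. by rewrite mxE expr0 -polyC1 lam_evC mul1r. Qed.

Lemma lam_act_delta (i t : 'I_p.+1) a c :
  lam_act (a *: delta_mx 0 i) c 0 t = a * ((- c) ^+ (t - i) *+ 'C(t, i)).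
Proof.
rewrite mxE /lam_ev (bigD1 i) //= big1 => [|k nki]; last first.
  by rewrite !mxE (negbTE nki) andbF mulr0 mulr0.
by rewrite !mxE !eqxx mulr1 addr0 coef_XsubC_exp mulrC.
Qed.

Lemma lam_act_delta_sub (i t : 'I_p.+1) a c :
  (lam_act (a *: delta_mx 0 i) (- c) - a *: delta_mx 0 i) 0 t
  = if t == i then 0 else a * (c ^+ (t - i) *+ 'C(t, i)).
Proof.
rewrite mxE [X in _ + X]mxE lam_act_delta opprK !mxE eqxx /=.
by case: eqP => [-> | _]; rewrite ?subnn ?binn ?mulr1 ?subrr // mulr0 subr0.
Qed.

Definition slam_ucoord (x : sT) : F := (slam_val x).1.

(* The dual coordinate of [x^p], i.e. of [1] after dehomogenisation; it is invariant
   under [U] because [1 \Po ('X - c%:P) = 1]. *)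
Definition slam_coord0 (x : sT) : F := (slam_val x).2 0 0.

Lemma slam_ucoordM : {in [set: sT] &, {morph slam_ucoord : x y / (x * y)%g}}.
Proof. by move=> [[a u]] [[b v]]. Qed.

Lemma slam_coord0M : {in [set: sT] &, {morph slam_coord0 : x y / (x * y)%g}}.
Proof. by move=> [[a u]] [[b v]] _ _; rewrite /slam_coord0 /= mxE lam_act_coord0. Qed.

Canonical slam_ucoord_morphism := Morphism slam_ucoordM.
Canonical slam_coord0_morphism := Morphism slam_coord0M.

Lemma mem_ker_ucoord x : (x \in ('ker slam_ucoord)%g) = (slam_ucoord x == 0).
Proof. by rewrite !inE. Qed.

Lemma mem_ker_coord0 x : (x \in ('ker slam_coord0)%g) = (slam_coord0 x == 0).
Proof. by rewrite !inE. Qed.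

Lemma index_ker_ucoord : #|S : 'ker slam_ucoord|%g = #|F|.
Proof.
apply: index_ker_onto; apply/setP => a; rewrite inE morphimEdom.
by apply/imsetP; exists (mk a 0).
Qed.

Lemma index_ker_coord0 : #|S : 'ker slam_coord0|%g = #|F|.
Proof.
apply: index_ker_onto; apply/setP => a; rewrite inE morphimEdom.
apply/imsetP; exists (mk 0 (const_mx a)) => //.
by rewrite /slam_coord0_morphism /= /slam_coord0 /= mxE.
Qed.

Lemma VLamE : V = ('ker slam_ucoord)%g.
Proof.
apply/setP => x; rewrite mem_ker_ucoord.
apply/imsetP/eqP => [[h _ ->] // | ].
by case: x => [[c h]]; rewrite /slam_ucoord /= => ->; exists h.
Qed.

Lemma VLam_abelian : abelian V.
Proof.
apply/centsP => _ /imsetP[h _ ->] _ /imsetP[k _ ->].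
by rewrite /commute !slam_mulE !lam_act0 (addrC h).
Qed.

Section PthPowers.
Hypotheses (pcharFp : p \in [pchar F]) (p_odd : odd p).

Lemma slam_expp c h :
  ((mk c h) ^+ p)%g
  = mk 0 (\row_(j < p.+1) ((- c ^+ p.-1 * h 0 0) *+ (j == p.-1 :> nat))).
Proof.
rewrite slam_expE (pcharf0 pcharFp) mul0r; congr (mk _ _); apply/rowP => j.
rewrite summxE !mxE; under eq_bigr => l _ do rewrite mxE.
rewrite -lam_ev_sum sum_XsubC_exp //; last exact: ltn_ord j.
by rewrite (lam_evC h) mulrnAl.
Qed.

Lemma slam_expp_eq1 x :
  ((x ^+ p)%g == 1%g) = (slam_ucoord x == 0) || (slam_coord0 x == 0).
Proof.
have p_gt1 := prime_gt1 (pcharf_prime pcharFp).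
have p1_gt0 : (0 < p.-1)%N by lia.
case: x => [[c h]]; rewrite slam_expp /slam_ucoord /slam_coord0 /=.
apply/eqP/idP => [[] /rowP/(_ (inord p.-1)) | c0_h0].
  rewrite !mxE inordK ?eqxx ?mulr1n; last by lia.
  by move/eqP; rewrite mulf_eq0 oppr_eq0 expf_eq0 p1_gt0.
rewrite slam_oneE; congr (mk _ _); apply/rowP => j; rewrite !mxE.
suff -> : - c ^+ p.-1 * h 0 0 = 0 by rewrite mul0rn.
by case/orP: c0_h0 => /eqP->; rewrite ?mulr0 // expr0n (gtn_eqF p1_gt0) oppr0 mul0r.
Qed.

Lemma exponent_ker_ucoord : exponent ('ker slam_ucoord)%g = p.
Proof.
apply: exponent_prime (pcharf_prime pcharFp) _ _.
  apply/trivgPn; exists (mk 0 (const_mx 1)); first by rewrite mem_ker_ucoord.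
  by apply/eqP => -[] /rowP/(_ 0); rewrite !mxE; apply/eqP/oner_neq0.
by move=> x; rewrite mem_ker_ucoord => x0; apply/eqP; rewrite slam_expp_eq1 x0.
Qed.

Lemma exponent_ker_coord0 : exponent ('ker slam_coord0)%g = p.
Proof.
apply: exponent_prime (pcharf_prime pcharFp) _ _.
  apply/trivgPn; exists (mk 1 0); first by rewrite mem_ker_coord0 /slam_coord0 /= mxE.
  by apply/eqP => -[] /eqP; rewrite oner_eq0.
by move=> x; rewrite mem_ker_coord0 => x0; apply/eqP; rewrite slam_expp_eq1 x0 orbT.
Qed.

End PthPowers.

Definition slam_vec h : sT := mk 0 h.

Lemma slam_vecM : {in [set: 'rV[F]_p.+1] &, {morph slam_vec : h1 h2 / (h1 * h2)%g}}.
Proof. by move=> h1 h2 _ _; rewrite /slam_vec slam_mulE addr0 lam_act0. Qed.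

Canonical slam_vec_morphism := Morphism slam_vecM.

Definition comm_rows : {group 'rV[F]_p.+1} := (slam_vec @*^-1 [~: V, S])%G.

Lemma mem_comm_rows w : (w \in comm_rows) = (mk 0 w \in [~: V, S]%g).
Proof. by rewrite !inE. Qed.

Lemma comm_rows_gen h c : lam_act h c - h \in comm_rows.
Proof.
rewrite mem_comm_rows.
have -> : mk 0 (lam_act h c - h) = [~ mk 0 h, mk c 0]%g.
  rewrite /commg /conjg !slam_invE !slam_mulE /= !oppr0 !add0r addNr !lam_act0.
  by rewrite !lam_act0h oppr0 lam_act0h add0r addr0 addrC.
by apply: mem_commg; [apply/imsetP; exists h | rewrite inE].
Qed.

Lemma comm_rowsBr g w : g \in comm_rows -> (w - g \in comm_rows) = (w \in comm_rows).
Proof. by move=> Rg; apply: (groupMr w (groupVr Rg)). Qed.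

Section CommutatorRows.
Hypothesis pcharFp : p \in [pchar F].

Lemma comm_rows_tail k w : (2 <= k <= p)%N -> w 0 ord_max = 0 ->
  (forall t : 'I_p.+1, (t < k)%N -> w 0 t = 0) -> w \in comm_rows.
Proof.
(* The generator at [k - 1] with [c = -1] has entries [a *+ 'C(t, k - 1)]: it clears
   coordinate [k] and leaves coordinate [p] alone because [p] divides ['C(p, k - 1)]. *)
move Dn : (p - k)%N => n; elim: n k Dn w => [|n IHn] k Dn w.
  move=> /andP[_ k_le_p] w_p w_lt_k; suff -> : w = 0 by apply: group1.
  apply/rowP => t; rewrite mxE; case: (ltnP t k) => [/w_lt_k // | k_le_t].
  by rewrite -w_p; congr (w 0 _); apply: val_inj; have := ltn_ord t; rewrite /=; lia.
move=> /andP[k_ge2 k_le_p] w_p w_lt_k; have k_lt_p : (k < p)%N by lia.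
pose i : 'I_p.+1 := inord k.-1; have iE : i = k.-1 :> nat by rewrite inordK //; lia.
pose a := w 0 (inord k) / k%:R.
pose g := lam_act (a *: delta_mx 0 i) (- 1) - a *: delta_mx 0 i.
have gE t : g 0 t = if t == i then 0 else a *+ 'C(t, i).
  by rewrite lam_act_delta_sub expr1n mulr_natr.
have wgE t : (w - g) 0 t = w 0 t - g 0 t by rewrite !mxE.
rewrite -(comm_rowsBr w (comm_rows_gen (a *: delta_mx 0 i) (- 1))) -/g.
apply: (IHn k.+1); [lia | lia | | ].
  rewrite wgE w_p gE -val_eqE /= iE (_ : (p == k.-1) = false); last by lia.
  by rewrite -mulr_natr bin_lt_pcharf_0 ?mulr0 ?subr0 //; lia.
move=> t; rewrite ltnS leq_eqVlt => /orP[/eqP t_k | t_lt_k].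
  rewrite wgE gE -val_eqE /= iE (_ : (t == k.-1 :> nat) = false); last by lia.
  rewrite t_k -{1}(prednK (ltnW k_ge2)) binSn prednK ?(ltnW k_ge2) //.
  rewrite -mulr_natr divfK; last by apply: (natr_pchar_neq0 pcharFp); lia.
  by rewrite (_ : inord k = t) ?subrr //; apply: val_inj; rewrite /= inordK //; lia.
rewrite wgE w_lt_k // gE sub0r; case: eqP => [_ | ti]; first by rewrite oppr0.
by rewrite bin_small ?oppr0 //; move/eqP: ti; rewrite -val_eqE /= iE; lia.
Qed.

Hypothesis F_gt_p : (p < #|F|)%N.

Lemma comm_rows_coord0 w : w 0 0 = 0 -> w \in comm_rows.
Proof.
move=> w0; have p_gt1 := prime_gt1 (pcharf_prime pcharFp).
have [d nfix_d] := @exists_frobenius_nonfixed F p (introT andP (conj p_gt1 F_gt_p)).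
(* Coordinates [1] and [p] are cleared by generators supported at [0]; their
   entries for [t > 0] are the constants [al] and the powers [be * d ^+ t]. *)
pose x1 := w 0 (inord 1); pose y := w 0 ord_max.
pose be := (y - x1) / (d ^+ p - d); pose al := x1 - be * d.
pose g1 : 'rV[F]_p.+1 := lam_act (al *: delta_mx 0 ord0) (- 1) - al *: delta_mx 0 ord0.
pose g2 : 'rV[F]_p.+1 := lam_act (be *: delta_mx 0 ord0) (- d) - be *: delta_mx 0 ord0.
have g1E t : g1 0 t = if t == ord0 then 0 else al.
  by rewrite lam_act_delta_sub expr1n bin0 mulr1.
have g2E t : g2 0 t = if t == ord0 then 0 else be * d ^+ t.
  by rewrite lam_act_delta_sub bin0 mulr1n subn0.
have wgE t : (w - g1 - g2) 0 t = w 0 t - g1 0 t - g2 0 t by rewrite !mxE.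
rewrite -(comm_rowsBr w (comm_rows_gen (al *: delta_mx 0 ord0) (- 1))) -/g1.
rewrite -(comm_rowsBr _ (comm_rows_gen (be *: delta_mx 0 ord0) (- d))) -/g2.
apply: (comm_rows_tail (k := 2)) => [| | t t_lt2]; first lia.
  rewrite wgE g1E g2E /= -val_eqE /= (_ : (p == 0) = false); last by lia.
  have dp_neq0 : d ^+ p - d != 0 by rewrite subr_eq0.
  by rewrite /al /be /y; field.
rewrite wgE g1E g2E; case: t t_lt2 => [[|[|//]] t_lt] _ /=.
  by rewrite (_ : Ordinal t_lt = 0) ?w0 ?subr0 //; exact: val_inj.
rewrite expr1 (_ : w 0 (Ordinal t_lt) = x1); last first.
  by congr (w 0 _); apply: val_inj; rewrite /= inordK.
by rewrite /al; ring.
Qed.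

End CommutatorRows.

Section Classification.
Hypotheses (pcharFp : p \in [pchar F]) (p_odd : odd p) (F_gt_p : (p < #|F|)%N).

Lemma ULam_commgE : (U * [~: V, S])%g = ('ker slam_coord0)%g.
Proof.
apply/esym/eqP; rewrite eqEsubset; apply/andP; split.
  apply/subsetP => -[[c h]]; rewrite mem_ker_coord0 /slam_coord0 /= => /eqP h0.
  have -> : mk c h = (mk c 0 * mk 0 h)%g by rewrite slam_mulE lam_act0h addr0 add0r.
  apply: mem_mulg; first by apply/imsetP; exists c.
  by rewrite -mem_comm_rows; apply: comm_rows_coord0.
apply: mul_subG.
  by apply/subsetP => _ /imsetP[c _ ->]; rewrite mem_ker_coord0 /slam_coord0 /= mxE.
rewrite gen_subG; apply/subsetP => _ /imset2P[x y _ _ ->].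
apply/kerP; rewrite ?inE // morphR ?inE //.
by apply/eqP/commgP; exact: addrC.
Qed.

Lemma ker_coord0_nonabelian : ~~ abelian ('ker slam_coord0)%g.
Proof.
have p_gt2 := odd_prime_gt2 p_odd (pcharf_prime pcharFp).
have lt1 : (1 < p.+1)%N by lia.
have lt2 : (2 < p.+1)%N by lia.
pose e1 : 'rV[F]_p.+1 := 1 *: delta_mx 0 (Ordinal lt1).
have x_ker : mk (-1) 0 \in ('ker slam_coord0)%g.
  by rewrite mem_ker_coord0 /slam_coord0 /= mxE.
have y_ker : mk 0 e1 \in ('ker slam_coord0)%g.
  by rewrite mem_ker_coord0 /slam_coord0 /= !mxE mulr0.
apply/negP => /centsP/(_ _ x_ker _ y_ker).
rewrite /commute !slam_mulE lam_act0h addr0 add0r => -[_] /rowP/(_ (Ordinal lt2)) /eqP.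
rewrite addr0 lam_act_delta !mxE -val_eqE /= opprK expr1n !mul1r eq_sym bin1.
by apply/negP; rewrite (natr_pchar_neq0 pcharFp) //; lia.
Qed.

Lemma normal_index_exponent (N : {group sT}) :
  [/\ (N <| S)%g, #|S : N|%g = #|F| & exponent N = p] <->
  (N :=: V \/ N :=: U * [~: V, S])%g.
Proof.
have cardN (K : {group sT}) : #|S : N|%g = #|F| -> #|S : K|%g = #|F| -> #|N| = #|K|.
  by move=> iN iK; apply: (@card_eq_indexg _ [set: sT]%G); rewrite ?subsetT // iN iK.
rewrite ULam_commgE VLamE; split=> [[_ iN eN] | [-> | ->]]; last first.
- by split; [exact: ker_normal | exact: index_ker_coord0 | exact: exponent_ker_coord0].
- by split; [exact: ker_normal | exact: index_ker_ucoord | exact: exponent_ker_ucoord].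
have : N \subset ('ker slam_ucoord :|: 'ker slam_coord0)%g.
  apply/subsetP => x Nx; rewrite inE mem_ker_ucoord mem_ker_coord0.
  by rewrite -slam_expp_eq1 //; have := expg_exponent Nx; rewrite eN => ->.
move/(@subsetU_group _ N ('ker slam_ucoord)%G ('ker slam_coord0)%G).
case/orP=> sNK; [left | right]; apply/eqP; rewrite eqEcard sNK /=.
  by rewrite (cardN _ iN index_ker_ucoord).
by rewrite (cardN _ iN index_ker_coord0).
Qed.

Lemma ULam_commg_char : (U * [~: V, S] \char S)%g.
Proof.
rewrite ULam_commgE; apply/(charP _ [set: sT]%G); split=> [|f inj_f fS].
  exact: subsetT.
have sKS : ('ker slam_coord0 \subset [set: sT])%g := subsetT _.
have : [/\ (f @* 'ker slam_coord0 <| S)%g, #|S : f @* 'ker slam_coord0|%g = #|F|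
         & exponent (f @* 'ker slam_coord0)%g = p].
  split.
  - by have := morphim_normal f (ker_normal slam_coord0); rewrite fS.
  - have := index_injm ('ker slam_coord0)%G inj_f (subxx [set: sT]).
    by rewrite fS index_ker_coord0.
  - by rewrite exponent_injm // exponent_ker_coord0.
case/(normal_index_exponent (f @* 'ker slam_coord0)%G) => [fK_V | ->]; last first.
  exact: ULam_commgE.
have := injm_abelian inj_f sKS; rewrite fK_V VLam_abelian.
by move=> ab_K; case/negP: ker_coord0_nonabelian; rewrite -ab_K.
Qed.

End Classification.

End SLambdaGroup.

Theorem lemma2p17 (p m : nat) (F : finFieldType) :
  prime p -> odd p -> (1 < m)%N -> #|F| = (p ^ m)%N ->
  (forall N : {group SLam_type F p},
      [/\ (N <| SLam F p)%g, (#|SLam F p : N|)%g = (p ^ m)%N & exponent N = p]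
      <-> ((N :=: VLam F p)%g \/ (N :=: ULam F p * [~: VLam F p, SLam F p])%g))
  /\ (ULam F p * [~: VLam F p, SLam F p] \char SLam F p)%g.
Proof.
move=> p_pr p_odd m_gt1 card_F.
have pcharFp : p \in [pchar F] := card_finPcharP card_F p_pr.
have F_gt_p : (p < #|F|)%N.
  by rewrite card_F -[X in (X < _)%N]expn1 ltn_exp2l // prime_gt1.
split; last exact: ULam_commg_char.
by move=> N; rewrite -card_F; exact: normal_index_exponent.
Qed.
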